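(* Let $\delta\in(0,1)$, let $X\subset\mathbb{R}_+$ be a Borel set with $0\in X$ and $\bar x=\sup X<\infty$, and let $0<x_0\le\bar x$. For $x\in[0,1]$ define $$q^*(x)=\frac{2(1-\delta)}{4-2\delta+x-\sqrt{x(x+8)}},\qquad \rho(x)=\frac12+\frac18\left(x+\sqrt{x(x+8)}\right).$$ Let $\bar q$ be the stationary decision rule with constant stopping probability $q^*(x_0/\bar x)$ (it stops with that probability after every history in which all alternatives $x_1,\dots,x_t$ equal $0$, and stops with probability $1$ after any history containing a nonzero alternative). Then, with $\mathcal B_X=\{F_{(z,\sigma)}:z\in X,\sigma\in[0,1]\}$: (a) $\bar q$ attains the performance ratio $\rho(x_0/\bar x)>1/2$, i.e. $R_{\bar q}(x_0,\mathcal B_X)=\rho(x_0/\bar x)>1/2$; (b) if $x_0/\bar x\le\delta^2/(2-\delta)$, then $\bar q$ is dynamically robust for $(x_0,\mathcal B_X)$.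
   Context: Sequential search model. Fix a discount factor $\delta\in(0,1)$, a Borel set $X\subset\mathbb{R}_+$ with $0\in X$, and an outside option $x_0>0$. Let $\mathcal F_X$ be the set of Borel probability distributions on $X$ with finite mean (''environments''); a set of feasible environments is any $\mathcal F\subset\mathcal F_X$. A history is $h_t=(x_0,x_1,\dots,x_t)$, $t\ge 0$, $x_i\in X$; its best-so-far alternative is $y_t=\max\{x_0,\dots,x_t\}$; $\mathcal H(x_0)$ is the set of all such histories. A decision rule $p$ assigns to each history $h$ a stopping probability $p(h)\in[0,1]$. Given an environment $F$ and a history $h_t$, the future alternatives are i.i.d. with law $F$; at each round $s\ge t$ the individual stops with probability $p(h_s)$ (otherwise she observes the next alternative), and stopping at round $s$ yields $\delta^{s-t}y_s$ (never stopping yields $0$). $U_p(F,h_t)$ is the expected payoff, and $V(F,h)=\sup_pU_p(F,h)$. A prior is a finitely supported probability distribution $\mu$ on $\mathcal F$; $\Delta(\mathcal F)$ is the set of priors, each $F$ identified with the point mass on it. An environment or prior is consistent with $h_t$ if $x_1,\dots,x_t$ occurs with positive probability under it; $\mathcal F(h)$, $\Delta(\mathcal F(h))$ denote the consistent ones. For consistent $\mu$, $U_p(\mu,h)=\sum_F\mu(F\mid h)U_p(F,h)$ with $\mu(\cdot\mid h)$ the Bayesian posterior, and $V(\mu,h)=\sup_pU_p(\mu,h)$. The performance ratio is $R_p(x_0,\mathcal F)=\inf_{h\in\mathcal H(x_0)}\inf_{\mu\in\Delta(\mathcal F(h))}U_p(\mu,h)/V(\mu,h)$, $R^*(x_0,\mathcal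 F)=\sup_pR_p(x_0,\mathcal F)$ over all decision rules, and $p$ is dynamically robust if $R_p(x_0,\mathcal F)=R^*(x_0,\mathcal F)$. A binary environment $F_{(z,\sigma)}$ is the lottery giving $0$ with probability $1-\sigma$ and $z$ with probability $\sigma$. *)

From Stdlib Require Import Reals Lra List.
From Coquelicot Require Import Coquelicot.
Import ListNotations.
Open Scope R_scope.

Inductive borel : (R -> Prop) -> Prop :=
  | borel_interval (a b : R) : borel (fun x => a < x < b)
  | borel_compl (A : R -> Prop) : borel A -> borel (fun x => ~ A x)
  | borel_union (A : nat -> R -> Prop) :
      (forall n, borel (A n)) -> borel (fun x => exists n, A n x).

(* A history h_t = (x_0, x_1, ..., x_t) is the list [x_0; x_1; ...; x_t]. *)
Definition history := list R.

(* Best-so-far alternative y_t = max {x_0,...,x_t} (all entries are >= 0). *)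
Definition best (h : history) : R := fold_right Rmax 0 h.

Definition history_in (X : R -> Prop) (x0 : R) (h : history) : Prop :=
  exists xs, h = x0 :: xs /\ List.Forall X xs.

(* Decision rules: stopping probability for every history. *)
Definition rule := history -> R.
Definition valid_rule (p : rule) : Prop := forall h, 0 <= p h <= 1.

(* Binary environment F_(z,sigma) represented by the pair (z, sigma). *)
Definition env := (R * R)%type.
Definition in_BX (X : R -> Prop) (e : env) : Prop :=
  X (fst e) /\ 0 <= snd e <= 1.

Definition pmass (e : env) (x : R) : R :=
  (if Req_EM_T x (fst e) then snd e else 0)
  + (if Req_EM_T x 0 then 1 - snd e else 0).

(* Probability of the alternatives x_1..x_t of h under e. *)
Definition lik (e : env) (h : history) : R :=
  fold_right (fun x r => pmass e x * r) 1 (tl h).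

Definition consistent (e : env) (h : history) : Prop := 0 < lik e h.

(* W n h = expected discounted payoff from stopping exactly n rounds after h. *)
Fixpoint W (delta : R) (p : rule) (e : env) (n : nat) (h : history) : R :=
  match n with
  | O => p h * best h
  | S n' => (1 - p h) * delta *
            (snd e * W delta p e n' (h ++ [fst e])
             + (1 - snd e) * W delta p e n' (h ++ [0]))
  end.

Definition U (delta : R) (p : rule) (e : env) (h : history) : R :=
  Series (fun n => W delta p e n h).

(* Finitely supported priors: lists of (weight, environment). *)
Definition prior := list (R * env).

Definition prior_on (X : R -> Prop) (h : history) (mu : prior) : Prop :=
  mu <> nil /\
  List.Forall (fun we => 0 < fst we /\ in_BX X (snd we) /\ consistent (snd we) h) mu /\
  fold_right (fun we s => fst we + s) 0 mu = 1.

(* U_p(mu,h) = sum_F mu(F|h) U_p(F,h), with the Bayesian posterior. *)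
Definition Uprior (delta : R) (p : rule) (mu : prior) (h : history) : R :=
  fold_right (fun we s => fst we * lik (snd we) h * U delta p (snd we) h + s) 0 mu
  / fold_right (fun we s => fst we * lik (snd we) h + s) 0 mu.

Definition Vprior (delta : R) (mu : prior) (h : history) : R :=
  real (Lub_Rbar (fun u => exists p, valid_rule p /\ u = Uprior delta p mu h)).

Definition perf (delta : R) (X : R -> Prop) (x0 : R) (p : rule) : R :=
  real (Glb_Rbar (fun r => exists h mu,
     history_in X x0 h /\ prior_on X h mu /\
     r = Uprior delta p mu h / Vprior delta mu h)).

Definition Rstar (delta : R) (X : R -> Prop) (x0 : R) : R :=
  real (Lub_Rbar (fun r => exists p, valid_rule p /\ r = perf delta X x0 p)).

Definition dyn_robust (delta : R) (X : R -> Prop) (x0 : R) (p : rule) : Prop :=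
  perf delta X x0 p = Rstar delta X x0.

Definition qstar (delta x : R) : R :=
  2 * (1 - delta) / (4 - 2 * delta + x - sqrt (x * (x + 8))).

Definition rho (x : R) : R :=
  1 / 2 + 1 / 8 * (x + sqrt (x * (x + 8))).

Definition is_zero (x : R) : bool := if Req_EM_T x 0 then true else false.

Definition qbar (delta x0 xbar : R) : rule :=
  fun h => if forallb is_zero (tl h) then qstar delta (x0 / xbar) else 1.

(* Against a binary lottery F_(z,sg), no rule can earn more after [x0 :: xs] than what
   stopping at once or waiting for the prize [z] earns ([value_bound]).  The stationary rule
   qbar earns at least rho times this bound: its value is explicit, and the gap is a sum of
   squares once x = x0 / xbar is eliminated through (2 rho - 1)^2 = rho x.  Bayesian mixing
   carries the bound over to every prior, and the point mass at 0 shows that rho is attained.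

   Conversely, a rule with performance r > rho must, along the all-zero histories, keep a
   ratio r both under the point mass at 0 (where stopping is right) and under a well-chosen
   F_(z,sg) with z close to xbar (where waiting is right).  After normalisation the ratio of
   the two relative regrets then grows by a fixed positive drift at every round while staying
   bounded, which is absurd.  The condition x0 / xbar <= delta^2 / (2 - delta) is exactly what
   makes a suitable (z, sg) exist. *)

From Stdlib Require Import Reals Lra List Classical.
From Coquelicot Require Import Coquelicot.
Import ListNotations.
Open Scope R_scope.

Lemma best_cons x h : best (x :: h) = Rmax x (best h).
Proof. reflexivity. Qed.

Lemma best_nonneg h : 0 <= best h.
Proof.
  induction h as [|x h IH]; [unfold best; simpl; lra|].
  rewrite best_cons. apply Rle_trans with (best h); [exact IH | apply Rmax_r].
Qed.

Lemma best_rcons h a : 0 <= a -> best (h ++ [a]) = Rmax (best h) a.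
Proof.
  intros Ha. induction h as [|x h IH].
  - unfold best; simpl. rewrite Rmax_left, Rmax_right; lra.
  - simpl app. rewrite !best_cons, IH. apply Rmax_assoc.
Qed.

Lemma is_zero_0 : is_zero 0 = true.
Proof. unfold is_zero. destruct Req_EM_T; congruence. Qed.

Lemma is_zero_neq0 z : z <> 0 -> is_zero z = false.
Proof. intros. unfold is_zero. destruct Req_EM_T; congruence. Qed.

Lemma all_zero_rcons0 xs : forallb is_zero xs = true -> forallb is_zero (xs ++ [0]) = true.
Proof. intros H. rewrite forallb_app, H. simpl. rewrite is_zero_0. reflexivity. Qed.

Lemma all_zero_repeat t : forallb is_zero (repeat 0 t) = true.
Proof. induction t as [|t IH]; simpl; [|rewrite is_zero_0, IH]; reflexivity. Qed.

Lemma best_all_zero xs : forallb is_zero xs = true -> best xs = 0.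
Proof.
  induction xs as [|x xs IH]; intros H; [reflexivity|].
  simpl in H. apply andb_prop in H as [Hx Hxs]. unfold is_zero in Hx.
  destruct Req_EM_T as [-> |]; [|discriminate].
  rewrite best_cons, IH by exact Hxs. apply Rmax_left; lra.
Qed.

Lemma best_cons_all_zero x0 xs :
  0 <= x0 -> forallb is_zero xs = true -> best (x0 :: xs) = x0.
Proof. intros Hx0 H. rewrite best_cons, best_all_zero by exact H. apply Rmax_left; lra. Qed.

Definition supported (z : R) (xs : list R) : Prop := List.Forall (fun x => x = 0 \/ x = z) xs.

Lemma supported_rcons z xs a : supported z xs -> a = 0 \/ a = z -> supported z (xs ++ [a]).
Proof. intros. apply List.Forall_app; auto. Qed.

Lemma supported_repeat z t : supported z (repeat 0 t).
Proof. induction t; simpl; constructor; auto. Qed.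

Lemma best_supported_le z xs : 0 <= z -> supported z xs -> best xs <= z.
Proof.
  intros Hz H. induction H as [|x xs Hx _ IH]; [unfold best; simpl; lra|].
  rewrite best_cons. apply Rmax_lub; [destruct Hx; lra | exact IH].
Qed.

Lemma best_supported_not_all_zero z xs :
  0 <= z -> supported z xs -> forallb is_zero xs = false -> best xs = z.
Proof.
  intros Hz H. induction H as [|x xs Hx Hxs IH]; intros Hf; simpl in Hf; [discriminate|].
  rewrite best_cons. destruct Hx as [-> | ->].
  - rewrite is_zero_0 in Hf. rewrite IH by exact Hf. apply Rmax_right; lra.
  - apply Rmax_left. apply best_supported_le; assumption.
Qed.

Lemma pmass_neq0 e x : pmass e x <> 0 -> x = 0 \/ x = fst e.
Proof. unfold pmass. do 2 destruct Req_EM_T; auto. intros H; lra. Qed.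

Lemma lik_neq0_supported e x0 xs : lik e (x0 :: xs) <> 0 -> supported (fst e) xs.
Proof.
  unfold lik; simpl tl. induction xs as [|x xs IH]; simpl; intros H; constructor.
  - apply pmass_neq0. intros E; apply H; rewrite E; ring.
  - apply IH. intros E; apply H; rewrite E; ring.
Qed.

Lemma lik_repeat e x0 t : lik e (x0 :: repeat 0 t) = pmass e 0 ^ t.
Proof. unfold lik; simpl tl. induction t as [|t IH]; simpl; [|rewrite IH]; reflexivity. Qed.

Lemma Series_const_0 : Series (fun _ => 0) = 0.
Proof.
  rewrite (Series_ext _ (fun n => 0 * (fun _ => 0) n)) by (intros; ring).
  rewrite Series_scal_l. ring.
Qed.

Section Payoff.

Variables (delta : R) (p : rule) (e : env).
Hypothesis Hdelta : 0 < delta < 1.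
Hypothesis Hp : valid_rule p.
Hypothesis Hsigma : 0 <= snd e <= 1.
Hypothesis Hz : 0 <= fst e.

Lemma W_nonneg n h : 0 <= W delta p e n h.
Proof.
  revert h; induction n as [|n IH]; intros h; simpl.
  - pose proof (Hp h); pose proof (best_nonneg h); nra.
  - pose proof (Hp h); pose proof (IH (h ++ [fst e])); pose proof (IH (h ++ [0])).
    apply Rmult_le_pos; nra.
Qed.

Lemma W_le_geometric n h : W delta p e n h <= delta ^ n * Rmax (best h) (fst e).
Proof.
  revert h; induction n as [|n IH]; intros h; simpl.
  - pose proof (Hp h); pose proof (best_nonneg h); pose proof (Rmax_l (best h) (fst e)). nra.
  - pose proof (Hp h) as Hph.
    assert (Hmax : forall a, a = 0 \/ a = fst e ->
              Rmax (best (h ++ [a])) (fst e) = Rmax (best h) (fst e)).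
    { intros a Ha. pose proof (best_nonneg h).
      rewrite best_rcons by (destruct Ha; lra). unfold Rmax.
      repeat destruct Rle_dec; destruct Ha; lra. }
    pose proof (IH (h ++ [fst e])) as H1. pose proof (IH (h ++ [0])) as H0.
    rewrite Hmax in H1, H0 by auto.
    pose proof (W_nonneg n (h ++ [fst e])); pose proof (W_nonneg n (h ++ [0])).
    set (B := delta ^ n * Rmax (best h) (fst e)) in *.
    set (S := snd e * W delta p e n (h ++ [fst e]) + (1 - snd e) * W delta p e n (h ++ [0])).
    assert (HS : 0 <= S <= B) by (unfold S; nra).
    assert (0 <= (1 - p h) * delta <= delta) by nra.
    apply Rle_trans with (delta * B); [nra | unfold B; right; ring].
Qed.

Lemma ex_series_W h : ex_series (fun n => W delta p e n h).
Proof.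
  apply (@ex_series_le R_AbsRing R_CompleteNormedModule _
           (fun n => Rmax (best h) (fst e) * delta ^ n)).
  - intros n. change norm with Rabs. pose proof (W_nonneg n h); pose proof (W_le_geometric n h).
    rewrite Rabs_right; lra.
  - apply (ex_series_scal_l _ (fun n => delta ^ n)), ex_series_geom.
    rewrite Rabs_right; lra.
Qed.

Lemma U_unfold h :
  U delta p e h = p h * best h + (1 - p h) * delta *
    (snd e * U delta p e (h ++ [fst e]) + (1 - snd e) * U delta p e (h ++ [0])).
Proof.
  unfold U at 1. rewrite Series_incr_1 by apply ex_series_W. simpl W at 1.
  rewrite (Series_ext _ (fun k => (1 - p h) * delta *
     (snd e * W delta p e k (h ++ [fst e]) + (1 - snd e) * W delta p e k (h ++ [0]))))
    by reflexivity.
  rewrite Series_scal_l, Series_plus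
    by (apply (ex_series_scal_l _ (fun k => W delta p e k _)), ex_series_W).
  rewrite !Series_scal_l. reflexivity.
Qed.

Lemma U_nonneg h : 0 <= U delta p e h.
Proof.
  unfold U. rewrite <- Series_const_0. apply Series_le; [|apply ex_series_W].
  intros n; split; [lra | apply W_nonneg].
Qed.

Lemma U_le_max h : U delta p e h <= Rmax (best h) (fst e) / (1 - delta).
Proof.
  unfold U. apply Rle_trans with (Series (fun n => Rmax (best h) (fst e) * delta ^ n)).
  - apply Series_le.
    + intros n; split; [apply W_nonneg|]. pose proof (W_le_geometric n h); lra.
    + apply (ex_series_scal_l _ (fun n => delta ^ n)), ex_series_geom.
      rewrite Rabs_right; lra.
  - rewrite Series_scal_l, (is_series_unique _ (/ (1 - delta))); [unfold Rdiv; lra|].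
    apply is_series_geom. rewrite Rabs_right; lra.
Qed.

End Payoff.

(** * An upper bound on values *)

Lemma le_0_of_le_geometric a K c : 0 <= c < 1 -> (forall n, a <= K * c ^ n) -> a <= 0.
Proof.
  intros Hc H. destruct (Rle_dec a 0) as [|Ha]; [assumption|exfalso].
  assert (HK : 0 < K) by (specialize (H O); simpl in H; lra).
  destruct (pow_lt_1_zero c) with (y := a / K) as [N HN].
  - rewrite Rabs_right; lra.
  - apply Rdiv_lt_0_compat; lra.
  - specialize (HN N (le_n _)). specialize (H N).
    rewrite Rabs_right in HN by (apply Rle_ge, pow_le; lra).
    apply (Rmult_lt_compat_l K) in HN; [|exact HK].
    replace (K * (a / K)) with a in HN by (field; lra). lra.
Qed.

Lemma eq_0_of_contraction (P : list R -> Prop) (f : list R -> R) c K :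
  0 <= c < 1 -> (forall xs, P xs -> P (xs ++ [0])) ->
  (forall xs, P xs -> Rabs (f xs) <= K) ->
  (forall xs, P xs -> f xs = c * f (xs ++ [0])) ->
  forall xs, P xs -> f xs = 0.
Proof.
  intros Hc HP HK Hf.
  assert (Hn : forall n xs, P xs -> Rabs (f xs) <= K * c ^ n).
  { induction n as [|n IH]; intros xs Hxs; simpl; [rewrite Rmult_1_r; auto|].
    rewrite Hf, Rabs_mult, (Rabs_right c) by (auto; lra).
    specialize (IH _ (HP _ Hxs)). nra. }
  intros xs Hxs. apply Rabs_eq_0.
  pose proof (le_0_of_le_geometric _ K c Hc (fun n => Hn n xs Hxs)).
  pose proof (Rabs_pos (f xs)). lra.
Qed.

Lemma convex_le p a b c : 0 <= p <= 1 -> a <= c -> b <= c -> p * a + (1 - p) * b <= c.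
Proof. intros. nra. Qed.

(* [sum_k delta^(k+1) (1-sg)^k sg M]: the value of stopping at the first arrival of the
   prize [M]. *)
Definition wait_value (delta sg M : R) : R := delta * sg * M / (1 - delta * (1 - sg)).

Lemma wait_step_le delta sg M V :
  0 < delta < 1 -> 0 <= sg <= 1 -> wait_value delta sg M <= V ->
  delta * (sg * M + (1 - sg) * V) <= V.
Proof.
  intros Hd Hs H. unfold wait_value in H.
  assert (Hden : 0 < 1 - delta * (1 - sg)) by nra.
  apply (Rmult_le_compat_r (1 - delta * (1 - sg))) in H; [|lra].
  replace (delta * sg * M / (1 - delta * (1 - sg)) * (1 - delta * (1 - sg)))
    with (delta * sg * M) in H by (field; lra).
  nra.
Qed.

(* Once the prize has appeared nothing beats [Rmax x0 z]; before, one can only stop or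
   wait for it. *)
Definition value_bound (delta : R) (e : env) (x0 : R) (xs : list R) : R :=
  if forallb is_zero xs then Rmax x0 (wait_value delta (snd e) (Rmax x0 (fst e)))
  else Rmax x0 (fst e).

Lemma value_bound_ge delta e x0 xs : x0 <= value_bound delta e x0 xs.
Proof. unfold value_bound; destruct forallb; apply Rmax_l. Qed.

Section ValueBound.

Variables (delta : R) (p : rule) (e : env) (x0 : R).
Hypothesis Hdelta : 0 < delta < 1.
Hypothesis Hp : valid_rule p.
Hypothesis Hsigma : 0 <= snd e <= 1.
Hypothesis Hz : 0 <= fst e.
Hypothesis Hx0 : 0 < x0.

Lemma U_le_supersolution (P : list R -> Prop) (Phi : list R -> R) (K : R) :
  (forall xs, P xs -> P (xs ++ [fst e]) /\ P (xs ++ [0])) ->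
  (forall xs, P xs -> 0 <= Phi xs /\ U delta p e (x0 :: xs) <= K) ->
  (forall xs, P xs ->
     p (x0 :: xs) * best (x0 :: xs) + (1 - p (x0 :: xs)) * delta *
       (snd e * Phi (xs ++ [fst e]) + (1 - snd e) * Phi (xs ++ [0])) <= Phi xs) ->
  forall xs, P xs -> U delta p e (x0 :: xs) <= Phi xs.
Proof.
  intros HP HK HPhi.
  assert (Hn : forall n xs, P xs -> U delta p e (x0 :: xs) <= Phi xs + K * delta ^ n).
  { induction n as [|n IH]; intros xs Hxs.
    - destruct (HK xs Hxs). simpl. lra.
    - destruct (HP xs Hxs) as [Hxz Hx0s].
      pose proof (IH _ Hxz) as Uz; pose proof (IH _ Hx0s) as U0.
      pose proof (HPhi xs Hxs) as Hstep. pose proof (Hp (x0 :: xs)) as Hpx.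
      assert (HK0 : 0 <= K * delta ^ n).
      { destruct (HK xs Hxs) as [_ HUK].
        pose proof (U_nonneg delta p e Hdelta Hp Hsigma Hz (x0 :: xs)).
        apply Rmult_le_pos; [lra | apply pow_le; lra]. }
      rewrite U_unfold by assumption. simpl app. simpl pow.
      set (pp := p (x0 :: xs)) in *.
      assert (Hmix : snd e * U delta p e (x0 :: xs ++ [fst e])
                     + (1 - snd e) * U delta p e (x0 :: xs ++ [0])
                     <= snd e * Phi (xs ++ [fst e]) + (1 - snd e) * Phi (xs ++ [0])
                        + K * delta ^ n) by nra.
      assert (Hpd : 0 <= (1 - pp) * delta <= delta) by nra.
      apply (Rmult_le_compat_l ((1 - pp) * delta)) in Hmix; [|lra].
      assert ((1 - pp) * delta * (K * delta ^ n) <= K * (delta * delta ^ n)) by nra.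
      lra. }
  intros xs Hxs. assert (U delta p e (x0 :: xs) - Phi xs <= 0); [|lra].
  apply (le_0_of_le_geometric _ K delta); [lra|]. intros n. specialize (Hn n xs Hxs). lra.
Qed.

Lemma value_bound_step xs : supported (fst e) xs ->
  p (x0 :: xs) * best (x0 :: xs) + (1 - p (x0 :: xs)) * delta *
    (snd e * value_bound delta e x0 (xs ++ [fst e])
     + (1 - snd e) * value_bound delta e x0 (xs ++ [0]))
  <= value_bound delta e x0 xs.
Proof.
  intros Hxs. rewrite Rmult_assoc. apply convex_le; [apply Hp| |].
  - unfold value_bound. destruct (forallb is_zero xs) eqn:E.
    + rewrite best_cons_all_zero by (auto; lra). apply Rmax_l.
    + rewrite best_cons. apply Rmax_lub; [apply Rmax_l|].
      pose proof (best_supported_le _ _ Hz Hxs). pose proof (Rmax_r x0 (fst e)). lra.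
  - set (M := Rmax x0 (fst e)).
    assert (HM : 0 <= M) by (pose proof (Rmax_l x0 (fst e)); unfold M; lra).
    unfold value_bound. rewrite !forallb_app. simpl forallb. rewrite is_zero_0.
    destruct (forallb is_zero xs); simpl andb; fold M.
    + set (V := Rmax x0 (wait_value delta (snd e) M)).
      assert (HV : wait_value delta (snd e) M <= V) by apply Rmax_r.
      assert (HxV : x0 <= V) by apply Rmax_l.
      destruct (Req_dec (fst e) 0) as [Hz0|Hz0].
      * rewrite Hz0, is_zero_0. simpl. nra.
      * rewrite is_zero_neq0 by exact Hz0. simpl. apply wait_step_le; assumption.
    + nra.
Qed.

Lemma U_le_value_bound xs :
  supported (fst e) xs -> U delta p e (x0 :: xs) <= value_bound delta e x0 xs.
Proof.
  apply (U_le_supersolution (supported (fst e)) _ (Rmax x0 (fst e) / (1 - delta))).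
  - intros xs' H. split; apply supported_rcons; auto.
  - intros xs' H. split; [pose proof (value_bound_ge delta e x0 xs'); lra|].
    eapply Rle_trans; [apply U_le_max; assumption|].
    apply Rmult_le_compat_r; [left; apply Rinv_0_lt_compat; lra|].
    rewrite best_cons. pose proof (best_supported_le _ _ Hz H).
    pose proof (Rmax_r x0 (fst e)).
    apply Rmax_lub; [apply Rmax_lub; [apply Rmax_l | lra] | apply Rmax_r].
  - exact value_bound_step.
Qed.

End ValueBound.

(** * The stationary rule *)

Definition stationary (q : R) : rule := fun h => if forallb is_zero (tl h) then q else 1.

Lemma stationary_valid q : 0 <= q <= 1 -> valid_rule (stationary q).
Proof. intros Hq h. unfold stationary. destruct forallb; lra. Qed.

Section Stationary.

Variables (delta q : R) (e : env) (x0 : R).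
Hypothesis Hdelta : 0 < delta < 1.
Hypothesis Hq : 0 <= q <= 1.
Hypothesis Hsigma : 0 <= snd e <= 1.
Hypothesis Hz : 0 <= fst e.
Hypothesis Hx0 : 0 < x0.

Let Hvalid := stationary_valid q Hq.

Lemma U_stationary_stopped xs :
  forallb is_zero xs = false -> U delta (stationary q) e (x0 :: xs) = best (x0 :: xs).
Proof. intros H. rewrite U_unfold by auto. unfold stationary; simpl tl. rewrite H. ring. Qed.

Lemma U_stationary_fixpoint A c :
  0 <= c < 1 ->
  (forall xs, forallb is_zero xs = true ->
     U delta (stationary q) e (x0 :: xs) = A + c * U delta (stationary q) e (x0 :: xs ++ [0])) ->
  forall xs, forallb is_zero xs = true -> U delta (stationary q) e (x0 :: xs) = A / (1 - c).
Proof.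
  intros Hc Hstep xs Hxs.
  enough (U delta (stationary q) e (x0 :: xs) - A / (1 - c) = 0) by lra.
  apply (eq_0_of_contraction (fun ys => forallb is_zero ys = true)
           (fun ys => U delta (stationary q) e (x0 :: ys) - A / (1 - c)) c
           (Rmax x0 (fst e) / (1 - delta) + Rabs (A / (1 - c)))); auto.
  - exact all_zero_rcons0.
  - intros ys Hys. eapply Rle_trans; [apply Rabs_triang|]. rewrite Rabs_Ropp.
    apply Rplus_le_compat_r.
    pose proof (U_nonneg delta _ e Hdelta Hvalid Hsigma Hz (x0 :: ys)).
    pose proof (U_le_max delta _ e Hdelta Hvalid Hsigma Hz (x0 :: ys)) as Hle.
    rewrite best_cons_all_zero in Hle by (auto; lra). rewrite Rabs_right; lra.
  - intros ys Hys. simpl. rewrite Hstep by exact Hys. field. lra.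
Qed.

Lemma U_stationary_null xs : fst e = 0 -> forallb is_zero xs = true ->
  U delta (stationary q) e (x0 :: xs) = q * x0 / (1 - (1 - q) * delta).
Proof.
  intros Hz0. apply U_stationary_fixpoint; [nra|]. intros ys Hys.
  rewrite U_unfold by auto. unfold stationary at 1 2; simpl tl. rewrite Hys, Hz0.
  rewrite best_cons_all_zero by (auto; lra). simpl app. ring.
Qed.

Lemma U_stationary_binary xs : fst e <> 0 -> forallb is_zero xs = true ->
  U delta (stationary q) e (x0 :: xs) =
  (q * x0 + (1 - q) * delta * snd e * Rmax x0 (fst e)) / (1 - (1 - q) * delta * (1 - snd e)).
Proof.
  intros Hz0. apply U_stationary_fixpoint.
  { assert (0 <= (1 - q) * (1 - snd e) <= 1) by nra. split; nra. }
  intros ys Hys. rewrite U_unfold by auto. unfold stationary at 1 2; simpl tl. rewrite Hys.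
  rewrite best_cons_all_zero by (auto; lra). simpl app.
  rewrite U_stationary_stopped by (rewrite forallb_app, Hys; simpl; rewrite is_zero_neq0; auto).
  rewrite best_cons, best_rcons, best_all_zero, (Rmax_right 0 (fst e)) by (auto; lra).
  ring.
Qed.

End Stationary.

Lemma rho_sq x : 0 <= x -> (2 * rho x - 1) ^ 2 = rho x * x.
Proof.
  intros Hx. unfold rho. pose proof (sqrt_sqrt (x * (x + 8))). nra.
Qed.

Lemma rho_bounds x : 0 < x <= 1 -> 1 / 2 < rho x <= 1.
Proof.
  intros Hx. unfold rho. set (s := sqrt (x * (x + 8))).
  assert (Hs2 : s * s = x * (x + 8)) by (apply sqrt_sqrt; nra).
  assert (Hs0 : 0 <= s) by apply sqrt_pos.
  nra.
Qed.

Lemma qstar_rho delta x : 0 < delta < 1 -> 0 < x <= 1 ->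
  qstar delta x = rho x * (1 - delta) / (1 - delta * rho x).
Proof.
  intros Hd Hx. pose proof (rho_bounds x Hx). pose proof (rho_sq x ltac:(lra)).
  unfold qstar. replace (sqrt (x * (x + 8))) with (8 * rho x - 4 - x) by (unfold rho; field).
  replace (4 - 2 * delta + x - (8 * rho x - 4 - x)) with (2 * (1 - delta * rho x) / rho x)
    by (field_simplify_eq; nra).
  field. split; nra.
Qed.

Lemma qstar_bounds delta x : 0 < delta < 1 -> 0 < x <= 1 -> 0 <= qstar delta x <= 1.
Proof.
  intros Hd Hx. rewrite qstar_rho by auto. pose proof (rho_bounds x Hx).
  assert (0 < 1 - delta * rho x) by nra. split.
  - apply Rdiv_le_0_compat; nra.
  - apply (Rmult_le_reg_r (1 - delta * rho x)); [lra|]. field_simplify; nra.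
Qed.

Section Guarantee.

Variables (delta r x q : R).
Hypothesis Hdelta : 0 < delta < 1.
Hypothesis Hr : 1 / 2 < r <= 1.
Hypothesis Hrx : (2 * r - 1) ^ 2 = r * x.
Hypothesis Hq : q = r * (1 - delta) / (1 - delta * r).

Lemma q_of_rho_bounds : 0 <= q <= 1.
Proof.
  assert (0 < 1 - delta * r) by nra. rewrite Hq. split.
  - apply Rdiv_le_0_compat; nra.
  - apply (Rmult_le_reg_r (1 - delta * r)); [lra|]. field_simplify; nra.
Qed.

Lemma stationary_denominator_pos sg : 0 <= sg <= 1 -> 0 < 1 - (1 - q) * delta * (1 - sg).
Proof.
  intros Hs. pose proof q_of_rho_bounds.
  assert (0 <= (1 - q) * (1 - sg) <= 1) by nra. nra.
Qed.

Lemma stationary_binary_ge_stop sg M x0 : 0 <= sg <= 1 -> 0 <= x0 <= M ->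
  r * x0 <= (q * x0 + (1 - q) * delta * sg * M) / (1 - (1 - q) * delta * (1 - sg)).
Proof.
  intros Hs HM. pose proof q_of_rho_bounds as Hq01.
  pose proof (stationary_denominator_pos sg Hs) as Hden.
  apply (Rle_div_r _ _ _ Hden).
  assert (Hq1 : q * (1 - delta * r) = r * (1 - delta)) by (rewrite Hq; field; nra).
  assert (0 <= (1 - q) * delta * sg * (M - x0)) by (repeat apply Rmult_le_pos; lra).
  assert (0 <= sg * (1 - q) * delta * (1 - r) * x0) by (repeat apply Rmult_le_pos; lra).
  nra.
Qed.

(* The gap is a sum of squares once [x] is eliminated through [(2 r - 1)^2 = r x]. *)
Lemma stationary_binary_ge_wait sg M x0 : 0 <= sg <= 1 -> 0 <= M -> x * M <= x0 ->
  r * wait_value delta sg M <=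
  (q * x0 + (1 - q) * delta * sg * M) / (1 - (1 - q) * delta * (1 - sg)).
Proof.
  intros Hs HM HxM. pose proof (stationary_denominator_pos sg Hs).
  assert (Hr1 : 0 < 1 - delta * r) by nra.
  assert (Hw : 0 < 1 - delta * (1 - sg)) by nra.
  set (L := 1 - delta + delta * sg).
  assert (Hid : (1 - delta * r) * ((q * x0 + (1 - q) * delta * sg * M) * (1 - delta * (1 - sg))
      - r * delta * sg * M * (1 - (1 - q) * delta * (1 - sg))) =
      r * (1 - delta) * (x0 - x * M) * L
      + M * ((2 * r - 1) * (1 - delta) - (1 - r) * delta * sg) ^ 2
      + M * (1 - delta) * L * (r * x - (2 * r - 1) ^ 2)).
  { rewrite Hq. unfold L. field. lra. }
  rewrite Hrx, Rminus_diag, Rmult_0_r, Rplus_0_r in Hid.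
  assert (0 <= L) by (unfold L; nra).
  assert (0 <= r * (1 - delta) * (x0 - x * M) * L) by (repeat apply Rmult_le_pos; lra).
  assert (0 <= M * ((2 * r - 1) * (1 - delta) - (1 - r) * delta * sg) ^ 2)
    by (apply Rmult_le_pos; [lra | apply pow2_ge_0]).
  unfold wait_value.
  apply (Rmult_le_reg_r ((1 - (1 - q) * delta * (1 - sg)) * (1 - delta * (1 - sg)))).
  { apply Rmult_lt_0_compat; lra. }
  field_simplify; [|lra|lra]. nra.
Qed.

Lemma U_stationary_ge e x0 xs :
  0 < x0 -> 0 <= fst e -> 0 <= snd e <= 1 -> x * Rmax x0 (fst e) <= x0 ->
  supported (fst e) xs -> r * value_bound delta e x0 xs <= U delta (stationary q) e (x0 :: xs).
Proof.
  intros Hx0 Hz Hs HxM Hxs. pose proof q_of_rho_bounds.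
  set (M := Rmax x0 (fst e)) in *.
  assert (HM : x0 <= M /\ fst e <= M) by (split; [apply Rmax_l | apply Rmax_r]).
  unfold value_bound. destruct (forallb is_zero xs) eqn:E.
  - destruct (Req_dec (fst e) 0) as [Hz0|Hz0].
    + rewrite U_stationary_null by auto.
      rewrite Rmax_left.
      * apply Req_le. rewrite Hq. field. nra.
      * unfold wait_value, M. rewrite Hz0, Rmax_left by lra.
        apply (Rmult_le_reg_r (1 - delta * (1 - snd e))); [nra|]. field_simplify; nra.
    + rewrite U_stationary_binary by auto. fold M. apply Rmax_case.
      * apply stationary_binary_ge_stop; lra.
      * apply stationary_binary_ge_wait; lra.
  - rewrite U_stationary_stopped, best_cons, (best_supported_not_all_zero _ _ Hz Hxs E) by auto.
    fold M. assert (0 <= M) by lra. nra.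
Qed.

End Guarantee.

Lemma real_Lub_Rbar_bounds (S : R -> Prop) B y0 : S y0 -> (forall y, S y -> y <= B) ->
  (forall y, S y -> y <= real (Lub_Rbar S)) /\ real (Lub_Rbar S) <= B.
Proof.
  intros H0 HB. destruct (Lub_Rbar_correct S) as [Hub Hl].
  specialize (Hl B (fun y Hy => HB y Hy)). pose proof (Hub y0 H0) as Hy0.
  destruct (Lub_Rbar S) as [l| |]; simpl in *; try contradiction.
  split; [intros y Hy; exact (Hub y Hy) | exact Hl].
Qed.

Lemma real_Lub_Rbar_max (S : R -> Prop) y0 :
  S y0 -> (forall y, S y -> y <= y0) -> real (Lub_Rbar S) = y0.
Proof.
  intros H0 HB. destruct (real_Lub_Rbar_bounds S y0 y0 H0 HB) as [H1 H2].
  specialize (H1 y0 H0). lra.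
Qed.

Lemma real_Glb_Rbar_min (S : R -> Prop) y0 :
  S y0 -> (forall y, S y -> y0 <= y) -> real (Glb_Rbar S) = y0.
Proof.
  intros H0 HB. destruct (Glb_Rbar_correct S) as [Hlb Hg].
  specialize (Hg y0 (fun y Hy => HB y Hy)). specialize (Hlb y0 H0).
  destruct (Glb_Rbar S); simpl in *; try contradiction. lra.
Qed.

(* Positivity excludes [Glb_Rbar S = m_infty], whose [real] is [0]. *)
Lemma real_Glb_Rbar_le (S : R -> Prop) y : 0 < real (Glb_Rbar S) -> S y -> real (Glb_Rbar S) <= y.
Proof.
  intros Hpos Hy. destruct (Glb_Rbar_correct S) as [Hlb _]. specialize (Hlb y Hy).
  destruct (Glb_Rbar S); simpl in *; lra.
Qed.

Definition weighted_sum (h : history) (g : env -> R) (mu : prior) : R :=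
  fold_right (fun we s => fst we * lik (snd we) h * g (snd we) + s) 0 mu.

Definition total_weight (h : history) (mu : prior) : R :=
  fold_right (fun we s => fst we * lik (snd we) h + s) 0 mu.

Lemma weighted_sum_cons h g we mu :
  weighted_sum h g (we :: mu) = fst we * lik (snd we) h * g (snd we) + weighted_sum h g mu.
Proof. reflexivity. Qed.

Lemma Uprior_weighted delta p mu h :
  Uprior delta p mu h = weighted_sum h (fun e => U delta p e h) mu / total_weight h mu.
Proof. reflexivity. Qed.

Lemma weighted_sum_le h g1 g2 mu :
  List.Forall (fun we => 0 <= fst we * lik (snd we) h /\ g1 (snd we) <= g2 (snd we)) mu ->
  weighted_sum h g1 mu <= weighted_sum h g2 mu.
Proof.
  induction 1 as [|we mu [H1 H2] _ IH]; simpl; [lra|].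
  apply Rplus_le_compat; [apply Rmult_le_compat_l|]; assumption.
Qed.

Lemma weighted_sum_scal h c g mu :
  weighted_sum h (fun e => c * g e) mu = c * weighted_sum h g mu.
Proof. induction mu as [|we mu IH]; simpl; [|rewrite IH]; ring. Qed.

Lemma weighted_sum_const h c mu : weighted_sum h (fun _ => c) mu = c * total_weight h mu.
Proof. induction mu as [|we mu IH]; simpl; [|rewrite IH]; ring. Qed.

Lemma weighted_sum_pos h g mu : mu <> nil ->
  List.Forall (fun we => 0 < fst we * lik (snd we) h /\ 0 < g (snd we)) mu ->
  0 < weighted_sum h g mu.
Proof.
  intros Hn H. destruct H as [|we mu [Hw Hg] H2]; [congruence|]. rewrite weighted_sum_cons.
  enough (0 <= weighted_sum h g mu) by (pose proof (Rmult_lt_0_compat _ _ Hw Hg); lra).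
  clear Hn. induction H2 as [|we' mu' [Hw' Hg'] _ IH]; [unfold weighted_sum; simpl; lra|].
  rewrite weighted_sum_cons. pose proof (Rmult_lt_0_compat _ _ Hw' Hg'). lra.
Qed.

Lemma ratio_ge_of_envwise delta q mu h (Phi : env -> R) r :
  0 < r -> valid_rule q -> mu <> nil ->
  List.Forall (fun we => 0 < fst we * lik (snd we) h /\ 0 < Phi (snd we) /\
     r * Phi (snd we) <= U delta q (snd we) h /\
     forall p, valid_rule p -> U delta p (snd we) h <= Phi (snd we)) mu ->
  r <= Uprior delta q mu h / Vprior delta mu h.
Proof.
  intros Hr Hq Hmu HF.
  assert (HD : 0 < total_weight h mu).
  { rewrite <- (Rmult_1_l (total_weight h mu)), <- weighted_sum_const.
    apply weighted_sum_pos; [exact Hmu|]. eapply Forall_impl; [|exact HF].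
    intros we (Hw & _). split; [exact Hw | lra]. }
  set (B := weighted_sum h Phi mu / total_weight h mu).
  assert (HB : 0 < B).
  { apply Rdiv_lt_0_compat; [|exact HD]. apply weighted_sum_pos; [exact Hmu|].
    eapply Forall_impl; [|exact HF]. intros we (Hw & HPhi & _). split; assumption. }
  assert (Hup : forall p, valid_rule p -> Uprior delta p mu h <= B).
  { intros p Hp. rewrite Uprior_weighted.
    apply Rmult_le_compat_r; [left; apply Rinv_0_lt_compat; lra|].
    apply weighted_sum_le. eapply Forall_impl; [|exact HF]. simpl. intros we (Hw & _ & _ & HU).
    split; [lra | apply HU, Hp]. }
  assert (Hlo : r * B <= Uprior delta q mu h).
  { unfold B. rewrite Uprior_weighted. unfold Rdiv. rewrite <- Rmult_assoc, <- weighted_sum_scal.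
    apply Rmult_le_compat_r; [left; apply Rinv_0_lt_compat; lra|].
    apply weighted_sum_le. eapply Forall_impl; [|exact HF].
    simpl. intros we (Hw & _ & HrU & _). split; lra. }
  destruct (real_Lub_Rbar_bounds (fun u => exists p, valid_rule p /\ u = Uprior delta p mu h) B
              (Uprior delta q mu h)) as [HV HVB].
  - exists q; auto.
  - intros y [p [Hp ->]]. exact (Hup p Hp).
  - fold (Vprior delta mu h) in HV, HVB.
    specialize (HV _ (ex_intro _ q (conj Hq eq_refl))).
    assert (0 < Vprior delta mu h) by nra.
    apply Rle_div_r; [lra|]. nra.
Qed.

Lemma ratio_bounds x0 xbar : 0 < x0 <= xbar -> 0 < x0 / xbar <= 1.
Proof.
  intros Hx. split; [apply Rdiv_lt_0_compat; lra|].
  apply Rle_div_l; lra.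
Qed.

Lemma Uprior_single delta p e h : lik e h <> 0 -> Uprior delta p [(1, e)] h = U delta p e h.
Proof. intros H. unfold Uprior. simpl. field. exact H. Qed.

Lemma prior_single X e h :
  X (fst e) -> 0 <= snd e <= 1 -> 0 < lik e h -> prior_on X h [(1, e)].
Proof.
  intros HX Hs Hl. split; [discriminate|]. split; [|simpl; ring].
  constructor; [|constructor]. simpl. split; [lra|]. split; [split|]; assumption.
Qed.

Lemma Vprior_single_bounds delta e x0 xs p0 :
  0 < delta < 1 -> 0 <= fst e -> 0 <= snd e <= 1 -> 0 < x0 -> 0 < lik e (x0 :: xs) ->
  valid_rule p0 ->
  U delta p0 e (x0 :: xs) <= Vprior delta [(1, e)] (x0 :: xs) <= value_bound delta e x0 xs.
Proof.
  intros Hd Hz Hs Hx0 Hl Hp0.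
  assert (Hsupp : supported (fst e) xs) by (apply (lik_neq0_supported e x0); lra).
  destruct (real_Lub_Rbar_bounds
              (fun u => exists p, valid_rule p /\ u = Uprior delta p [(1, e)] (x0 :: xs))
              (value_bound delta e x0 xs) (Uprior delta p0 [(1, e)] (x0 :: xs))) as [H1 H2].
  - exists p0; auto.
  - intros y [p [Hp ->]]. rewrite Uprior_single by lra. apply U_le_value_bound; auto.
  - split; [|exact H2]. rewrite <- (Uprior_single delta p0) by lra. apply H1. exists p0; auto.
Qed.

Lemma lik_null_repeat x0 t : lik (0, 0) (x0 :: repeat 0 t) = 1.
Proof.
  rewrite lik_repeat. unfold pmass; simpl. destruct Req_EM_T; [|lra].
  replace (0 + (1 - 0)) with 1 by ring. apply pow1.
Qed.

Lemma Vprior_null delta x0 t : 0 < delta < 1 -> 0 < x0 ->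
  Vprior delta [(1, (0, 0))] (x0 :: repeat 0 t) = x0.
Proof.
  intros Hd Hx0.
  destruct (Vprior_single_bounds delta (0, 0) x0 (repeat 0 t) (stationary 1)) as [Hlo Hhi];
    simpl; try lra.
  - rewrite lik_null_repeat; lra.
  - apply stationary_valid; lra.
  - rewrite U_stationary_null in Hlo by (simpl; auto using all_zero_repeat; lra).
    unfold value_bound, wait_value in Hhi. rewrite all_zero_repeat in Hhi. simpl in Hhi.
    rewrite (Rmax_left x0 0) in Hhi by lra.
    replace (delta * 0 * x0 / (1 - delta * (1 - 0))) with 0 in Hhi by (field; lra).
    rewrite Rmax_left in Hhi by lra.
    replace (1 * x0 / (1 - (1 - 1) * delta)) with x0 in Hlo by (field; lra). lra.
Qed.

Lemma qbar_ratio_ge_rho delta X xbar x0 xs mu :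
  0 < delta < 1 -> (forall x, X x -> 0 <= x) -> is_lub X xbar -> 0 < x0 <= xbar ->
  prior_on X (x0 :: xs) mu ->
  rho (x0 / xbar) <= Uprior delta (qbar delta x0 xbar) mu (x0 :: xs) / Vprior delta mu (x0 :: xs).
Proof.
  intros Hd HX Hlub Hx [Hmu [HF _]].
  pose proof (ratio_bounds x0 xbar Hx) as Hx1. pose proof (rho_bounds _ Hx1) as Hr.
  apply (ratio_ge_of_envwise _ _ _ _ (fun e => value_bound delta e x0 xs));
    [lra | apply stationary_valid, qstar_bounds; auto | exact Hmu |].
  eapply Forall_impl; [|exact HF]. intros [w e] (Hw & [HXz Hs] & Hlik). simpl in *.
  unfold consistent in Hlik.
  assert (Hz : 0 <= fst e <= xbar) by (split; [apply HX | apply (proj1 Hlub)]; auto).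
  assert (Hsupp : supported (fst e) xs) by (apply (lik_neq0_supported e x0); lra).
  assert (HxM : x0 / xbar * Rmax x0 (fst e) <= x0).
  { apply Rle_trans with (x0 / xbar * xbar).
    - apply Rmult_le_compat_l; [lra | apply Rmax_lub; lra].
    - right. field. lra. }
  split; [|split; [|split]].
  - apply Rmult_lt_0_compat; assumption.
  - pose proof (value_bound_ge delta e x0 xs). lra.
  - apply (U_stationary_ge delta _ (x0 / xbar)); auto; try lra.
    + apply rho_sq. lra.
    + apply qstar_rho; assumption.
  - intros p Hp. apply U_le_value_bound; auto; lra.
Qed.

Lemma perf_qbar delta X xbar x0 :
  0 < delta < 1 -> (forall x, X x -> 0 <= x) -> X 0 -> is_lub X xbar -> 0 < x0 <= xbar ->
  perf delta X x0 (qbar delta x0 xbar) = rho (x0 / xbar).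
Proof.
  intros Hd HX H0 Hlub Hx. pose proof (ratio_bounds x0 xbar Hx) as Hx1.
  unfold perf. apply real_Glb_Rbar_min.
  - exists (x0 :: repeat 0 0), [(1, (0, 0))].
    split; [exists []; split; auto|].
    split; [apply prior_single; [exact H0 | simpl; lra | rewrite lik_null_repeat; lra]|].
    rewrite Uprior_single by (rewrite lik_null_repeat; lra).
    rewrite Vprior_null by lra.
    change (qbar delta x0 xbar) with (stationary (qstar delta (x0 / xbar))).
    pose proof (qstar_bounds delta _ Hd Hx1).
    rewrite U_stationary_null by (simpl; auto; lra).
    pose proof (rho_bounds _ Hx1). rewrite qstar_rho by assumption.
    field. split; nra.
  - intros y (h & mu & [xs [-> _]] & Hmu & ->). apply (qbar_ratio_ge_rho delta X); assumption.
Qed.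

(** * No rule does better below the threshold *)

Lemma bounded_of_linear_growth_absurd (s : nat -> R) E B :
  0 < E -> 0 <= s O -> (forall t, s t + E <= s (S t)) -> (forall t, s t <= B) -> False.
Proof.
  intros HE Hs0 Hstep Hb.
  assert (Hn : forall n, s O + INR n * E <= s n).
  { induction n as [|n IH]; [simpl; lra|]. rewrite S_INR. specialize (Hstep n). lra. }
  destruct (INR_unbounded (B / E)) as [n Hn1].
  apply (Rmult_gt_compat_r E) in Hn1; [|exact HE].
  replace (B / E * E) with B in Hn1 by (field; lra).
  specialize (Hn n). specialize (Hb n). lra.
Qed.

Definition drift (delta c M R0 : R) : R := M / R0 * (1 - delta) - (1 - c) + (delta - c) * M.

Section Drift.

Variables (delta c M R0 : R) (p F G : nat -> R).
Hypothesis Hdelta : 0 < delta < 1.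
Hypothesis Hc : 0 <= c < delta.
Hypothesis HM : 0 < M < 1.
Hypothesis HR0 : 0 < R0 <= 1.
Hypothesis Hp : forall t, 0 <= p t <= 1.
Hypothesis HF : forall t, F t = (1 - p t) * (1 - delta + delta * F (S t)).
Hypothesis HFb : forall t, 0 <= F t <= R0.
Hypothesis HG : forall t, G t <= (1 - p t) * (1 - c + c * G (S t)).
Hypothesis HGb : forall t, M <= G t <= 1.
Hypothesis HE : 0 < drift delta c M R0.

Lemma drift_continue_ge t : M <= 1 - p t.
Proof.
  pose proof (HG t); pose proof (HGb t); pose proof (HGb (S t)); pose proof (Hp t).
  assert (0 <= 1 - c + c * G (S t) <= 1) by nra. nra.
Qed.

Lemma drift_F_ge t : M * (1 - delta) <= F t.
Proof.
  rewrite HF. pose proof (drift_continue_ge t); pose proof (HFb (S t)).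
  assert (1 - delta <= 1 - delta + delta * F (S t)) by nra. nra.
Qed.

Lemma drift_F_pos t : 0 < F t.
Proof. pose proof (drift_F_ge t). nra. Qed.

Lemma drift_ratio_le t : G t / F t <= 1 / (M * (1 - delta)).
Proof.
  pose proof (HGb t); pose proof (drift_F_ge t); pose proof (drift_F_pos t).
  unfold Rdiv. apply Rle_trans with (1 * / F t).
  - apply Rmult_le_compat_r; [left; apply Rinv_0_lt_compat|]; lra.
  - apply Rmult_le_compat_l; [lra|]. apply Rinv_le_contravar; [nra | lra].
Qed.

(* [G' Y - X F' - drift * Y F'] is a sum of three nonnegative terms, where [X] and [Y]
   are the continuation factors of [G] and [F]. *)
Lemma drift_ratio_step t : G t / F t + drift delta c M R0 <= G (S t) / F (S t).
Proof.
  set (E := drift delta c M R0). set (F' := F (S t)). set (G' := G (S t)).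
  set (X := 1 - c + c * G'). set (Y := 1 - delta + delta * F').
  pose proof (drift_F_pos (S t)) as HF'. pose proof (HFb (S t)) as HF'b.
  pose proof (HGb (S t)) as HG'b. fold F' G' in HF', HF'b, HG'b.
  assert (HY : 0 < Y <= 1) by (unfold Y; nra).
  assert (Hnow : G t / F t <= X / Y).
  { pose proof (drift_continue_ge t). pose proof (HG t) as HGt. fold G' X in HGt.
    rewrite HF. fold F' Y. apply Rle_div_l; [nra|].
    replace (X / Y * ((1 - p t) * Y)) with ((1 - p t) * X) by (field; lra). lra. }
  assert (Hnext : X / Y + E <= G' / F').
  { apply Rle_div_r; [lra|].
    replace ((X / Y + E) * F') with ((X * F' + E * Y * F') / Y) by (field; lra).
    apply Rle_div_l; [lra|].
    assert (Hid : G' * Y - X * F' - E * Y * F' =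
      (G' - M / R0 * F') * (1 - delta) + (delta - c) * F' * (G' - M) + E * F' * (1 - Y))
      by (unfold X, Y, E, drift; ring).
    assert (M / R0 * F' <= M).
    { replace (M / R0 * F') with (M * (F' / R0)) by (field; lra).
      rewrite <- (Rmult_1_r M) at 2. apply Rmult_le_compat_l; [lra|]. apply Rle_div_l; lra. }
    assert (0 <= (G' - M / R0 * F') * (1 - delta)) by (apply Rmult_le_pos; lra).
    assert (0 <= (delta - c) * F' * (G' - M)) by (repeat apply Rmult_le_pos; lra).
    assert (0 <= E * F' * (1 - Y)) by (unfold E; repeat apply Rmult_le_pos; lra).
    lra. }
  lra.
Qed.

Lemma drift_absurd : False.
Proof.
  apply (bounded_of_linear_growth_absurd (fun t => G t / F t) (drift delta c M R0)
           (1 / (M * (1 - delta)))).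
  - exact HE.
  - pose proof (HGb O); pose proof (drift_F_pos O). apply Rdiv_le_0_compat; lra.
  - exact drift_ratio_step.
  - exact drift_ratio_le.
Qed.

End Drift.

Lemma rho_threshold delta x : 0 < delta < 1 -> 0 < x <= 1 -> x <= delta ^ 2 / (2 - delta) ->
  rho x * (2 - delta) <= 1.
Proof.
  intros Hd Hx Hc. pose proof (rho_sq x ltac:(lra)) as Hsq. pose proof (rho_bounds x Hx).
  set (r := rho x) in *. set (t := 2 * r - 1).
  assert (H1 : x * (2 - delta) <= delta ^ 2).
  { apply Rle_div_r in Hc; lra. }
  assert (H2 : t ^ 2 * (2 - delta) <= r * delta ^ 2).
  { unfold t. rewrite Hsq, Rmult_assoc. apply Rmult_le_compat_l; lra. }
  replace r with ((1 + t) / 2) in H2 by (unfold t; field).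
  assert (((2 - delta) * t - delta) * (2 * t + delta) <= 0) by nra.
  assert ((2 - delta) * t - delta <= 0) by (unfold t in *; nra).
  unfold t in *. nra.
Qed.

(* [drift] is positive exactly when the normalised outside option lies below this threshold. *)
Definition target_ratio (delta r sg : R) : R :=
  (2 * r - 1) / r - (1 - r) ^ 2 * delta * sg / ((1 - delta) * r).

Lemma target_ratio_lt delta r sg : 0 < delta < 1 -> 1 / 2 < r < 1 -> 0 <= sg ->
  target_ratio delta r sg < r.
Proof.
  intros Hd Hr Hs. unfold target_ratio.
  assert (0 <= (1 - r) ^ 2 * delta * sg / ((1 - delta) * r)).
  { apply Rdiv_le_0_compat; [|nra].
    apply Rmult_le_pos; [apply Rmult_le_pos; [apply pow2_ge_0 | lra] | lra]. }
  assert ((2 * r - 1) / r < r) by (apply Rlt_div_l; nra).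
  lra.
Qed.

Lemma drift_pos_of_lt_target delta r sg a :
  0 < delta < 1 -> 1 / 2 < r < 1 -> 0 < sg < 1 -> 0 <= a < target_ratio delta r sg ->
  0 < drift delta (delta * (1 - sg)) ((r - a) / (1 - a)) (1 - r).
Proof.
  intros Hd Hr Hs Ha. pose proof (target_ratio_lt delta r sg Hd Hr ltac:(lra)).
  replace (drift delta (delta * (1 - sg)) ((r - a) / (1 - a)) (1 - r))
    with ((1 - delta) * r / (1 - r) * (target_ratio delta r sg - a) / (1 - a))
    by (unfold drift, target_ratio; field; repeat split; lra).
  apply Rdiv_lt_0_compat; [|lra]. apply Rmult_lt_0_compat; [|lra].
  apply Rdiv_lt_0_compat; nra.
Qed.

(* The gap is a concave quadratic in [sg], negative at [0]; it is positive at [ss]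
   (this is where [rho x * (2 - delta) <= 1] gives [ss <= 1]), hence also slightly below. *)
Lemma exists_sg_below_target delta x r :
  0 < delta < 1 -> 0 < x <= 1 -> rho x * (2 - delta) <= 1 -> rho x < r < 1 ->
  exists sg, 0 < sg < 1 /\ x * (1 - delta + delta * sg) / delta < sg * target_ratio delta r sg.
Proof.
  intros Hd Hx Hrc Hr. pose proof (rho_sq x ltac:(lra)) as Hsq. pose proof (rho_bounds x Hx).
  set (rh := rho x) in *.
  assert (Hrh1 : rh < 1) by nra.
  assert (Hxe : x = (2 * rh - 1) ^ 2 / rh) by (rewrite Hsq; field; lra).
  set (gap := fun sg => sg * target_ratio delta r sg - x * (1 - delta + delta * sg) / delta).
  enough (exists sg, 0 < sg < 1 /\ 0 < gap sg) as (sg & Hs & Hg)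
    by (exists sg; split; [exact Hs | unfold gap in Hg; lra]).
  set (ss := (2 * rh - 1) * (1 - delta) / ((1 - rh) * delta)).
  assert (Hss : 0 < ss <= 1).
  { split; [apply Rdiv_lt_0_compat; nra|]. apply Rle_div_l; nra. }
  set (k := (2 * rh - 1) / (1 - rh)).
  assert (Hk : 0 < k) by (apply Rdiv_lt_0_compat; lra).
  assert (Hgap_ss : 0 < gap ss).
  { replace (gap ss) with (ss * ((r - rh) * (3 - 2 * rh + k * (2 - r - rh)) / r))
      by (unfold gap, target_ratio, k, ss; rewrite Hxe; field; repeat split; nra).
    apply Rmult_lt_0_compat; [lra|]. apply Rdiv_lt_0_compat; [|lra].
    apply Rmult_lt_0_compat; nra. }
  set (g0 := x * (1 - delta) / delta).
  assert (Hg0 : 0 < g0) by (apply Rdiv_lt_0_compat; nra).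
  set (lam := (g0 + gap ss / 2) / (g0 + gap ss)).
  assert (Hlam : 0 < lam < 1).
  { split; [apply Rdiv_lt_0_compat; lra | apply Rlt_div_l; lra]. }
  exists (lam * ss). split; [split; nra|].
  set (B := (1 - r) ^ 2 * delta / ((1 - delta) * r)).
  assert (HB : 0 <= B).
  { apply Rdiv_le_0_compat; [|nra]. apply Rmult_le_pos; [apply pow2_ge_0 | lra]. }
  assert (Hconc : gap (lam * ss) = lam * gap ss - (1 - lam) * g0 + B * lam * (1 - lam) * ss ^ 2)
    by (unfold gap, target_ratio, B, g0; field; lra).
  assert (lam * gap ss - (1 - lam) * g0 = gap ss / 2) by (unfold lam; field; lra).
  assert (0 <= B * lam * (1 - lam) * ss ^ 2).
  { apply Rmult_le_pos; [|apply pow2_ge_0]. apply Rmult_le_pos; [apply Rmult_le_pos|]; lra. }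
  lra.
Qed.

Lemma exists_hard_env delta X xbar x0 r :
  0 < delta < 1 -> is_lub X xbar -> 0 < x0 <= xbar -> x0 / xbar <= delta ^ 2 / (2 - delta) ->
  rho (x0 / xbar) < r < 1 ->
  exists z sg, X z /\ 0 < sg < 1 /\ 0 < z /\ x0 / wait_value delta sg z < target_ratio delta r sg.
Proof.
  intros Hd Hlub Hx Hc Hr. pose proof (ratio_bounds x0 xbar Hx) as Hx1.
  destruct (exists_sg_below_target delta (x0 / xbar) r) as (sg & Hs & Hgap);
    auto using rho_threshold.
  set (T := target_ratio delta r sg) in *. set (L := 1 - delta + delta * sg) in *.
  assert (HL : 0 < L) by (unfold L; nra).
  replace (x0 / xbar * L / delta) with (x0 * L / (xbar * delta)) in Hgap by (field; lra).
  rewrite Rlt_div_l in Hgap by (apply Rmult_lt_0_compat; lra).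
  assert (HT : 0 < T).
  { assert (0 < x0 * L) by (apply Rmult_lt_0_compat; lra).
    assert (0 < sg * (xbar * delta)) by (apply Rmult_lt_0_compat; nra).
    destruct (Rlt_or_le 0 T) as [|HT]; [assumption|]. nra. }
  assert (Hdst : 0 < delta * sg * T) by (apply Rmult_lt_0_compat; nra).
  set (zth := x0 * L / (delta * sg * T)).
  assert (Hzth : zth < xbar) by (apply Rlt_div_l; lra).
  destruct (classic (exists z, X z /\ zth < z)) as [(z & HXz & Hz) | Hno].
  - assert (Hzth0 : 0 < zth) by (apply Rdiv_lt_0_compat; nra).
    assert (Hdsz : 0 < delta * sg * z) by (repeat apply Rmult_lt_0_compat; lra).
    exists z, sg. split; [exact HXz|]. split; [exact Hs|]. split; [lra|].
    unfold wait_value. replace (1 - delta * (1 - sg)) with L by (unfold L; ring).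
    replace (x0 / (delta * sg * z / L)) with (x0 * L / (delta * sg * z)) by (field; lra).
    rewrite Rlt_div_l by lra. unfold zth in Hz. rewrite Rlt_div_l in Hz by lra.
    fold T. replace (T * (delta * sg * z)) with (z * (delta * sg * T)) by ring. exact Hz.
  - exfalso. assert (Hub : is_upper_bound X zth).
    { intros y Hy. apply Rnot_lt_le. intros Hlt. apply Hno. exists y. auto. }
    pose proof (proj2 Hlub _ Hub). lra.
Qed.

Lemma value_bound_null_zeros delta x0 t : 0 < delta < 1 -> 0 < x0 ->
  value_bound delta (0, 0) x0 (repeat 0 t) = x0.
Proof.
  intros Hd Hx0. unfold value_bound, wait_value. rewrite all_zero_repeat. simpl.
  rewrite (Rmax_left x0 0) by lra.
  replace (delta * 0 * x0 / (1 - delta * (1 - 0))) with 0 by (field; lra).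
  apply Rmax_left. lra.
Qed.

Lemma lik_binary_zeros_pos z sg x0 t : z <> 0 -> sg < 1 -> 0 < lik (z, sg) (x0 :: repeat 0 t).
Proof.
  intros Hz Hsg. rewrite lik_repeat. unfold pmass; simpl.
  destruct (Req_EM_T 0 z); [congruence|]. destruct Req_EM_T; [|lra].
  apply pow_lt. lra.
Qed.

Section ZeroHistories.

Variables (delta : R) (p : rule) (x0 z sg : R).
Hypothesis Hdelta : 0 < delta < 1.
Hypothesis Hp : valid_rule p.
Hypothesis Hx0 : 0 < x0.
Hypothesis Hz : x0 <= z.
Hypothesis Hsg : 0 < sg < 1.

Lemma U_null_zeros t :
  U delta p (0, 0) (x0 :: repeat 0 t) =
  p (x0 :: repeat 0 t) * x0
  + (1 - p (x0 :: repeat 0 t)) * delta * U delta p (0, 0) (x0 :: repeat 0 (S t)).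
Proof.
  rewrite U_unfold by (simpl; auto; lra). simpl fst; simpl snd.
  rewrite best_cons_all_zero by (auto using all_zero_repeat; lra).
  simpl app. rewrite <- repeat_cons. cbn [repeat]. ring.
Qed.

Lemma U_null_zeros_le t : U delta p (0, 0) (x0 :: repeat 0 t) <= x0.
Proof.
  eapply Rle_trans; [apply U_le_value_bound; simpl; auto using supported_repeat; lra|].
  rewrite value_bound_null_zeros by assumption. lra.
Qed.

Lemma U_binary_zeros_le_unfold t :
  U delta p (z, sg) (x0 :: repeat 0 t) <=
  p (x0 :: repeat 0 t) * x0 + (1 - p (x0 :: repeat 0 t)) * delta *
    (sg * z + (1 - sg) * U delta p (z, sg) (x0 :: repeat 0 (S t))).
Proof.
  rewrite U_unfold by (simpl; auto; lra). simpl fst; simpl snd.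
  rewrite best_cons_all_zero by (auto using all_zero_repeat; lra).
  simpl app. rewrite <- repeat_cons. cbn [repeat].
  assert (Hprize : U delta p (z, sg) (x0 :: repeat 0 t ++ [z]) <= z).
  { eapply Rle_trans.
    - apply U_le_value_bound; simpl; auto; try lra.
      apply supported_rcons; [apply supported_repeat | right; reflexivity].
    - unfold value_bound. rewrite forallb_app, all_zero_repeat. simpl.
      rewrite is_zero_neq0 by lra. simpl. apply Rmax_lub; lra. }
  pose proof (Hp (x0 :: repeat 0 t)).
  assert (0 <= (1 - p (x0 :: repeat 0 t)) * delta * sg) by (repeat apply Rmult_le_pos; lra).
  nra.
Qed.

Hypothesis Hwait : x0 <= wait_value delta sg z.

Lemma U_binary_zeros_le t : U delta p (z, sg) (x0 :: repeat 0 t) <= wait_value delta sg z.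
Proof.
  eapply Rle_trans; [apply U_le_value_bound; simpl; auto using supported_repeat; lra|].
  unfold value_bound. rewrite all_zero_repeat. simpl.
  rewrite (Rmax_right x0 z), Rmax_right by lra. lra.
Qed.

Lemma Vprior_binary_ge t :
  wait_value delta sg z <= Vprior delta [(1, (z, sg))] (x0 :: repeat 0 t).
Proof.
  pose proof (lik_binary_zeros_pos z sg x0 t ltac:(lra) ltac:(lra)).
  destruct (Vprior_single_bounds delta (z, sg) x0 (repeat 0 t) (stationary 0)) as [Hlo _];
    simpl; try lra; [apply stationary_valid; lra|].
  rewrite U_stationary_binary in Hlo by (simpl; auto using all_zero_repeat; lra).
  simpl in Hlo. rewrite Rmax_right in Hlo by lra.
  unfold wait_value. replace (delta * sg * z / (1 - delta * (1 - sg)))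
    with ((0 * x0 + (1 - 0) * delta * sg * z) / (1 - (1 - 0) * delta * (1 - sg)))
    by (field; nra).
  exact Hlo.
Qed.

End ZeroHistories.

Lemma scaled_bounds r u c : 0 < c -> r * c <= u <= c -> r <= u / c <= 1.
Proof. intros Hc Hu. split; [apply Rle_div_r | apply Rle_div_l]; lra. Qed.

(* [U0] and [U1] are the values of a rule along the all-zero histories under the null
   environment and under F_(z,sg); normalised, they fall under [drift_absurd]. *)
Lemma zero_history_values_absurd delta x0 z sg r (q U0 U1 : nat -> R) :
  0 < delta < 1 -> 0 < x0 -> 0 < z -> 0 < sg < 1 -> 1 / 2 < r < 1 ->
  x0 / wait_value delta sg z < target_ratio delta r sg ->
  (forall t, 0 <= q t <= 1) ->
  (forall t, U0 t = q t * x0 + (1 - q t) * delta * U0 (S t)) ->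
  (forall t, r * x0 <= U0 t <= x0) ->
  (forall t, U1 t <= q t * x0 + (1 - q t) * delta * (sg * z + (1 - sg) * U1 (S t))) ->
  (forall t, r * wait_value delta sg z <= U1 t <= wait_value delta sg z) -> False.
Proof.
  intros Hd Hx0 Hz Hsg Hr Ha Hq HU0 HU0b HU1 HU1b.
  set (w := wait_value delta sg z) in *.
  assert (Hden : 0 < 1 - delta * (1 - sg)) by nra.
  assert (Hw : 0 < w) by (apply Rdiv_lt_0_compat; [repeat apply Rmult_lt_0_compat|]; lra).
  set (a := x0 / w) in *.
  assert (Ha0 : 0 < a) by (apply Rdiv_lt_0_compat; lra).
  pose proof (target_ratio_lt delta r sg Hd Hr ltac:(lra)).
  set (M := (r - a) / (1 - a)).
  apply (drift_absurd delta (delta * (1 - sg)) M (1 - r) q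
           (fun t => 1 - U0 t / x0) (fun t => (U1 t / w - a) / (1 - a))).
  - exact Hd.
  - split; nra.
  - split; [apply Rdiv_lt_0_compat | apply Rlt_div_l]; lra.
  - lra.
  - exact Hq.
  - intros t. rewrite (HU0 t) at 1. field. lra.
  - intros t. pose proof (scaled_bounds r (U0 t) x0 Hx0 (HU0b t)). lra.
  - intros t. set (c := delta * (1 - sg)).
    assert (Hu : U1 t / w <= q t * a + (1 - q t) * (1 - c + c * (U1 (S t) / w))).
    { apply Rle_div_l; [lra|]. eapply Rle_trans; [exact (HU1 t)|]. right.
      unfold a, c, w, wait_value. field. lra. }
    apply Rle_div_l; [lra|].
    replace ((1 - q t) * (1 - c + c * ((U1 (S t) / w - a) / (1 - a))) * (1 - a))
      with ((1 - q t) * (1 - c + c * (U1 (S t) / w)) - (1 - q t) * a) by (field; lra).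
    lra.
  - intros t. pose proof (scaled_bounds r (U1 t) w Hw (HU1b t)). unfold M. split.
    + apply Rmult_le_compat_r; [left; apply Rinv_0_lt_compat|]; lra.
    + apply Rle_div_l; lra.
  - apply drift_pos_of_lt_target; lra.
Qed.

Lemma history_in_zeros X x0 t : X 0 -> history_in X x0 (x0 :: repeat 0 t).
Proof.
  intros H0. exists (repeat 0 t). split; [reflexivity|].
  apply Forall_forall. intros y Hy. apply repeat_spec in Hy. subst y. exact H0.
Qed.

Lemma ratio_ge_on_zero_histories_absurd delta X x0 p r z sg :
  0 < delta < 1 -> X 0 -> 0 < x0 -> valid_rule p -> X z -> 0 < sg < 1 -> 0 < z ->
  1 / 2 < r < 1 -> x0 / wait_value delta sg z < target_ratio delta r sg ->
  (forall h mu, history_in X x0 h -> prior_on X h mu ->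
     r <= Uprior delta p mu h / Vprior delta mu h) ->
  False.
Proof.
  intros Hd H0 Hx0 Hp HXz Hsg Hz Hr Ha Hratio.
  set (w := wait_value delta sg z) in *.
  pose proof (target_ratio_lt delta r sg Hd Hr ltac:(lra)).
  assert (Hw0 : 0 < w).
  { apply Rdiv_lt_0_compat; [repeat apply Rmult_lt_0_compat|]; nra. }
  assert (Hxw : x0 < w) by (rewrite Rlt_div_l in Ha by lra; nra).
  assert (Hwz : w <= z) by (apply Rle_div_l; nra).
  apply (zero_history_values_absurd delta x0 z sg r (fun t => p (x0 :: repeat 0 t))
           (fun t => U delta p (0, 0) (x0 :: repeat 0 t))
           (fun t => U delta p (z, sg) (x0 :: repeat 0 t))); try lra.
  - exact Ha.
  - intros t. apply Hp.
  - intros t. apply U_null_zeros; lra || assumption.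
  - intros t. split; [|apply U_null_zeros_le; assumption || lra].
    pose proof (Hratio _ [(1, (0, 0))] (history_in_zeros X x0 t H0)) as Hnull.
    rewrite Uprior_single, Vprior_null in Hnull by (rewrite ?lik_null_repeat; lra).
    apply Rle_div_r; [|apply Hnull, prior_single; [exact H0 | simpl; lra |]]; [lra|].
    rewrite lik_null_repeat; lra.
  - intros t. apply U_binary_zeros_le_unfold; assumption || lra.
  - intros t. split; [|apply U_binary_zeros_le; first [assumption | fold w; lra]].
    pose proof (lik_binary_zeros_pos z sg x0 t ltac:(lra) ltac:(lra)) as Hlik.
    pose proof (Hratio _ [(1, (z, sg))] (history_in_zeros X x0 t H0)
                  (prior_single X (z, sg) _ HXz ltac:(simpl; lra) Hlik)) as Hbin.
    rewrite Uprior_single in Hbin by lra.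
    assert (HV : w <= Vprior delta [(1, (z, sg))] (x0 :: repeat 0 t))
      by (apply Vprior_binary_ge; first [assumption | fold w; lra]).
    rewrite <- Rle_div_r in Hbin by lra. fold w. nra.
Qed.

Lemma perf_le_rho delta X xbar x0 p :
  0 < delta < 1 -> X 0 -> is_lub X xbar -> 0 < x0 <= xbar ->
  x0 / xbar <= delta ^ 2 / (2 - delta) -> valid_rule p ->
  perf delta X x0 p <= rho (x0 / xbar).
Proof.
  intros Hd H0 Hlub Hx Hc Hp. pose proof (ratio_bounds x0 xbar Hx) as Hx1.
  pose proof (rho_bounds _ Hx1). pose proof (rho_threshold delta _ Hd Hx1 Hc).
  set (rh := rho (x0 / xbar)) in *. set (P := perf delta X x0 p).
  destruct (Rle_lt_dec P rh) as [|Hgt]; [assumption|exfalso].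
  set (r := Rmin P ((1 + rh) / 2)).
  assert (Hr : rh < r < 1 /\ r <= P) by (unfold r, Rmin; destruct Rle_dec; nra).
  assert (Hratio : forall h mu, history_in X x0 h -> prior_on X h mu ->
                     r <= Uprior delta p mu h / Vprior delta mu h).
  { intros h mu Hh Hmu. apply Rle_trans with P; [lra|].
    apply real_Glb_Rbar_le; [fold (perf delta X x0 p); fold P; lra|]. exists h, mu. auto. }
  destruct (exists_hard_env delta X xbar x0 r Hd Hlub Hx Hc (proj1 Hr))
    as (z & sg & HXz & Hsg & Hz & Ha).
  apply (ratio_ge_on_zero_histories_absurd delta X x0 p r z sg); auto; lra.
Qed.

Theorem theorem1 (delta : R) (X : R -> Prop) (xbar x0 : R) :
  0 < delta < 1 ->
  borel X ->
  (forall x, X x -> 0 <= x) ->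
  X 0 ->
  is_lub X xbar ->
  0 < x0 <= xbar ->
  (perf delta X x0 (qbar delta x0 xbar) = rho (x0 / xbar) /\ rho (x0 / xbar) > 1 / 2) /\
  (x0 / xbar <= delta ^ 2 / (2 - delta) ->
     dyn_robust delta X x0 (qbar delta x0 xbar)).
Proof.
  (* Only membership in [X] of the prizes of binary lotteries matters, so [borel X] is unused. *)
  intros Hd _ HX H0 Hlub Hx. pose proof (ratio_bounds x0 xbar Hx) as Hx1.
  assert (Hperf : perf delta X x0 (qbar delta x0 xbar) = rho (x0 / xbar))
    by (apply perf_qbar; assumption).
  split; [split; [exact Hperf | pose proof (rho_bounds _ Hx1); lra]|].
  intros Hc. unfold dyn_robust, Rstar. symmetry. apply real_Lub_Rbar_max.
  - exists (qbar delta x0 xbar). split; [|reflexivity].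
    apply stationary_valid, qstar_bounds; assumption.
  - intros y [p [Hp ->]]. rewrite Hperf. apply (perf_le_rho delta X xbar x0 p); assumption.
Qed.
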